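(* Let $\Sigma_2=\{1,2\}^{\mathbb{Z}}$ with the infinite product topology, let $T\colon\Sigma_2\to\Sigma_2$ be the shift $T[(x_n)_{n\in\mathbb{Z}}]=(x_{n+1})_{n\in\mathbb{Z}}$, and let $d$ be any metric on $\Sigma_2$ which generates the product topology. Then there exist functions $f,g\colon\Sigma_2\to(0,1]$ and $\phi\colon\Sigma_2\to\mathbb{R}$, all Lipschitz continuous with respect to $d$, such that the function $A\colon\Sigma_2\to\mathrm{GL}_2(\mathbb{R})$, \[A(x):=\begin{pmatrix}f(x)&\phi(x)\\0&g(x)\end{pmatrix},\] satisfies \[\lim_{n\to\infty}\sup_{x\in\Sigma_2}\|A(T^{n-1}x)\cdots A(x)\|^{1/n}=1,\qquad \lim_{n\to\infty}\frac1n\sup_{x\in\Sigma_2}\|A(T^{n-1}x)\cdots A(x)\|=0,\] and \[\sup_{n\ge1}\sup_{x\in\Sigma_2}\|A(T^{n-1}x)\cdots A(x)\|=\infty.\]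
   Context: $\|\cdot\|$ is the Euclidean operator norm on $2\times 2$ real matrices. *)

From HB Require Import structures.
From mathcomp Require Import all_boot all_order all_algebra.
From mathcomp Require Import all_classical all_reals all_analysis.
Set Implicit Arguments. Unset Strict Implicit. Unset Printing Implicit Defensive.
Import Order.TTheory GRing.Theory Num.Theory.
Local Open Scope classical_set_scope.
Local Open Scope ring_scope.

(* Sigma_2 = {1,2}^Z, symbols encoded as booleans. *)
Definition Sigma2 := int -> bool.

Definition shift (x : Sigma2) : Sigma2 := fun k => x (k + 1)%R.

Definition prod_open (U : set Sigma2) : Prop :=
  forall x, U x -> exists N : nat,
    forall y : Sigma2, (forall k : int, `|k| <= N%:Z -> y k = x k) -> U y.

Definition is_metric (R : realType) (d : Sigma2 -> Sigma2 -> R) : Prop :=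
  (forall x y, 0 <= d x y) /\
  (forall x y, d x y = 0 <-> x = y) /\
  (forall x y, d x y = d y x) /\
  (forall x y z, d x z <= d x y + d y z).

Definition metric_open (R : realType) (d : Sigma2 -> Sigma2 -> R)
  (U : set Sigma2) : Prop :=
  forall x, U x -> exists2 e : R, 0 < e & forall y, d x y < e -> U y.

Definition generates_product_topology (R : realType)
  (d : Sigma2 -> Sigma2 -> R) : Prop :=
  is_metric d /\ (forall U, metric_open d U <-> prod_open U).

Definition lipschitz_wrt (R : realType) (d : Sigma2 -> Sigma2 -> R)
  (h : Sigma2 -> R) : Prop :=
  exists L : R, forall x y, `|h x - h y| <= L * d x y.

Definition vnorm2 (R : realType) (v : 'cV[R]_2) : R :=
  Num.sqrt (\sum_(i < 2) v i 0 ^+ 2).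

Definition opnorm (R : realType) (M : 'M[R]_2) : R :=
  sup [set vnorm2 (M *m v) | v in [set v : 'cV[R]_2 | vnorm2 v <= 1]].

Definition Amat (R : realType) (f g phi : Sigma2 -> R) (x : Sigma2) : 'M[R]_2 :=
  \matrix_(i < 2, j < 2)
    if (i == 0 :> nat) then (if (j == 0 :> nat) then f x else phi x)
    else (if (j == 0 :> nat) then 0 else g x).

Fixpoint Aprod (R : realType) (A : Sigma2 -> 'M[R]_2) (n : nat) (x : Sigma2)
  : 'M[R]_2 :=
  match n with
  | 0%N => 1%:M
  | m.+1 => A (iter m shift x) *m Aprod A m x
  end.

From Pilot Require Import Defs.
From HB Require Import structures.
From mathcomp Require Import all_boot all_order all_algebra.
From mathcomp Require Import all_classical all_reals all_analysis.
From mathcomp Require Import ring lra zify.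
Import Order.TTheory GRing.Theory Num.Theory.
Local Open Scope classical_set_scope.
Local Open Scope ring_scope.

(* Take f = 1, phi = e and g = 1 - e^2 for a suitable
   1-Lipschitz function e : Sigma2 -> [0, 1/2].  The products are then
     A(T^{n-1}x)...A(x) = [[1, s_n(x)], [0, P_n(x)]],
   with P_n the product of the 1 - e(T^k x)^2 and s_n = sum_k e(T^k x) P_k(x).
   - Upper bound: e P D <= e^2 P + D^2 and the e^2 P_k telescope, so
     s_n <= 1/D + n D for every D > 0.  Hence ||A^(n)|| = o(n), and since
     1 <= ||A^(n)|| <= n + 3, the n-th roots tend to 1.
   - Unboundedness: if e = D is constant along an orbit, then
     s_n >= n D - n^2 D^3, which is about 1/(4D) for n ~ 1/(2 D^2).  So it
     suffices that e takes arbitrarily small positive constant values on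
     periodic orbits.
   - Such an e (the "bump" below) is the supremum of tents of height
     h_N <= 1/(N+2) centred at the points of the periodic orbit of period
     N+1; h_N is chosen below the d-distance separating that orbit from the
     orbits of smaller period, which is positive because d generates the
     product topology.  Then e = h_N on that orbit. *)

Set Implicit Arguments. Unset Strict Implicit.

Section OperatorNorm.
Variable R : realType.

Lemma sum_ord2 (F : 'I_2 -> R) : \sum_(i < 2) F i = F 0 + F 1.
Proof.
rewrite big_ord_recr big_ord_recr big_ord0 /= add0r.
by congr (F _ + F _); apply/val_inj.
Qed.

Lemma ord2P (i : 'I_2) : i = 0 \/ i = 1.
Proof. by case: i => [[|[|//]] ?]; [left|right]; apply/val_inj. Qed.

Lemma vnorm2E (v : 'cV[R]_2) : vnorm2 v = Num.sqrt (v 0 0 ^+ 2 + v 1 0 ^+ 2).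
Proof. by rewrite /vnorm2 sum_ord2. Qed.

Lemma norm2_le_abs (a b : R) : Num.sqrt (a ^+ 2 + b ^+ 2) <= `|a| + `|b|.
Proof.
rewrite -(ger0_norm (addr_ge0 (normr_ge0 a) (normr_ge0 b))).
rewrite -sqrtr_sqr ler_sqrt ?sqr_ge0 // sqrrD !real_normK ?num_real //.
by rewrite -addrA lerD2l lerDr mulrn_wge0 // mulr_ge0.
Qed.

Lemma abs_le_norm2 (a b : R) : `|a| <= Num.sqrt (a ^+ 2 + b ^+ 2).
Proof. by rewrite -sqrtr_sqr ler_sqrt ?addr_ge0 ?sqr_ge0 // lerDl sqr_ge0. Qed.

Lemma mulmx_col2 (M : 'M[R]_2) (v : 'cV[R]_2) i :
  (M *m v) i 0 = M i 0 * v 0 0 + M i 1 * v 1 0.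
Proof. by rewrite mxE sum_ord2. Qed.

Lemma vnorm2_coord_le1 (v : 'cV[R]_2) i : vnorm2 v <= 1 -> `|v i 0| <= 1.
Proof.
move=> /(le_trans _); apply; rewrite vnorm2E.
by case: (ord2P i) => ->; [|rewrite addrC]; exact: abs_le_norm2.
Qed.

Definition entry_sum (M : 'M[R]_2) : R :=
  `|M 0 0| + `|M 0 1| + `|M 1 0| + `|M 1 1|.

Let unit_image (M : 'M[R]_2) : set R :=
  [set vnorm2 (M *m v) | v in [set v : 'cV[R]_2 | vnorm2 v <= 1]].

Lemma unit_image_ub (M : 'M[R]_2) : ubound (unit_image M) (entry_sum M).
Proof.
move=> _ [v /= hv <-].
have h0 := vnorm2_coord_le1 0 hv; have h1 := vnorm2_coord_le1 1 hv.
have row_le a b (c d : R) : `|a| <= 1 -> `|b| <= 1 ->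
    `|c * a + d * b| <= `|c| + `|d|.
  move=> ha hb; rewrite (le_trans (ler_normD _ _)) // !normrM.
  by rewrite lerD // ler_piMr.
rewrite vnorm2E (le_trans (norm2_le_abs _ _)) // !mulmx_col2 /entry_sum.
by rewrite -[X in _ <= X]addrA lerD // row_le.
Qed.

Lemma unit_image_has_sup (M : 'M[R]_2) : has_sup (unit_image M).
Proof.
split; last by exists (entry_sum M); exact: unit_image_ub.
by exists (vnorm2 (M *m 0)), 0 => //=; rewrite vnorm2E !mxE expr0n /= addr0 sqrtr0.
Qed.

Lemma opnorm_le_entry_sum (M : 'M[R]_2) : opnorm M <= entry_sum M.
Proof. by apply: ge_sup; [case: (unit_image_has_sup M)|exact: unit_image_ub]. Qed.

(* Testing on a basis vector: the entries of the first row bound the norm. *)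
Lemma row0_le_opnorm (M : 'M[R]_2) (j : 'I_2) : `|M 0 j| <= opnorm M.
Proof.
pose u : 'cV[R]_2 := \matrix_(i < 2, k < 1) (if i == j then 1 else 0).
have u_unit : vnorm2 u <= 1.
  by rewrite vnorm2E !mxE; case: (ord2P j) => -> /=;
    rewrite ?expr0n ?expr1n /= ?addr0 ?add0r sqrtr1.
apply: le_trans (sup_upper_bound (unit_image_has_sup M) _); last by exists u.
rewrite vnorm2E !mulmx_col2 !mxE.
by case: (ord2P j) => -> /=; rewrite !mulr1 !mulr0 ?addr0 ?add0r abs_le_norm2.
Qed.

End OperatorNorm.

Lemma cvge_eventually_close (R : realType) (u : nat -> \bar R) (l : R) :
  (forall e : R, 0 < e -> exists N, forall n, (N <= n)%N ->
     ((l - e)%:E <= u n)%E /\ (u n <= (l + e)%:E)%E) -> u @ \oo --> l%:E.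
Proof.
move=> close.
have fin_close e n : ((l - e)%:E <= u n)%E -> (u n <= (l + e)%:E)%E ->
    u n \is a fin_num.
  by move=> h1 h2; rewrite fin_numElt (lt_le_trans _ h1) ?ltNyr // (le_lt_trans h2) ?ltry.
apply/fine_cvgP; split.
  have [N HN] := close 1 ltr01.
  by exists N => // n /= /HN [h1 h2]; exact: fin_close h1 h2.
apply/cvgrPdist_le => e e0; have [N HN] := close e e0.
exists N => // n /= /HN [h1 h2].
move: h1 h2 (fin_close _ _ h1 h2) => + + /fineK un.
rewrite -un !lee_fin => h1 h2.
rewrite ler_norml; apply/andP; split; lra.
Qed.

Lemma ereal_sup_within (R : realType) (F : Sigma2 -> R) (a b : R) :
  (forall x, a <= F x <= b) ->
  (a%:E <= ereal_sup [set (F x)%:E | x in [set: Sigma2]])%E /\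
  (ereal_sup [set (F x)%:E | x in [set: Sigma2]] <= b%:E)%E.
Proof.
move=> Fab; split.
  apply: le_trans (ereal_sup_ubound _); last by exists (fun=> true).
  by rewrite lee_fin; case/andP: (Fab (fun=> true)).
by apply: ge_ereal_sup => _ [x _ <-]; rewrite lee_fin; case/andP: (Fab x).
Qed.

Lemma bernoulli2 (R : realFieldType) (E : R) n : 0 <= E ->
  1 + n%:R * E + (n * n.-1)%:R / 2 * E ^+ 2 <= (1 + E) ^+ n.
Proof.
move=> E0; elim: n => [|n IH]; first by rewrite !mul0r expr0 !addr0.
have cS : ((n.+1 * n.+1.-1)%:R : R) = (n * n.-1)%:R + 2 * n%:R.
  by case: n {IH} => [|n] //=; rewrite ?mul0r ?addr0 // -natrM -natrD; congr (_%:R); lia.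
rewrite cS [in X in _ <= X]exprS.
apply: le_trans _ (ler_wpM2l (_ : 0 <= 1 + E) IH); last by lra.
set c := (n * n.-1)%:R.
have c3 : 0 <= c / 2 * E ^+ 3 by rewrite mulr_ge0 ?exprn_ge0 // divr_ge0.
have -> : (1 + E) * (1 + n%:R * E + c / 2 * E ^+ 2) =
   1 + (n%:R + 1) * E + (c + 2 * n%:R) / 2 * E ^+ 2 + c / 2 * E ^+ 3.
  by field.
by rewrite -natr1 lerDl.
Qed.

Lemma linear_le_expr (R : realType) (E : R) : 0 < E ->
  exists N, forall n, (N <= n)%N -> n%:R + 3 <= (1 + E) ^+ n.
Proof.
move=> E0; set K := Num.truncn (8 / E ^+ 2).
have hK : 8 / E ^+ 2 < K.+1%:R.
  by case/andP: (truncn_itv (ltW (divr_gt0 (ltr0n _ 8) (exprn_gt0 2 E0)))).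
exists K.+2 => n hn; apply: le_trans (bernoulli2 n (ltW E0)).
have big : 8 < n.-1%:R * E ^+ 2.
  rewrite -ltr_pdivrMr ?exprn_gt0 //; apply: lt_le_trans hK _.
  by rewrite ler_nat; case: n hn => //= n; rewrite ltnS.
have -> : (n * n.-1)%:R / 2 * E ^+ 2 = n%:R * (n.-1%:R * E ^+ 2) / 2 :> R.
  by rewrite natrM; field.
have n1 : (1 <= n%:R :> R) by rewrite ler1n; case: n hn {big}.
have nE : 0 <= n%:R * E :> R by rewrite mulr_ge0 // ltW.
have n8 : n%:R * 8 <= n%:R * (n.-1%:R * E ^+ 2) :> R by rewrite ler_wpM2l // ltW.
lra.
Qed.

Lemma weighted_amgm (R : realFieldType) (E P D : R) : 0 <= P -> P <= 1 ->
  E * P * D <= E ^+ 2 * P + D ^+ 2.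
Proof.
move=> P0 P1.
have sq : 0 <= P * (E - D) ^+ 2 by rewrite mulr_ge0 ?sqr_ge0.
have PE : 0 <= P * E ^+ 2 by rewrite mulr_ge0 ?sqr_ge0.
have PD : P * D ^+ 2 <= D ^+ 2 by rewrite ler_piMl ?sqr_ge0.
rewrite sqrrB in sq; nra.
Qed.

Section TriangularCocycle.
Variables (R : realType) (e : Sigma2 -> R).

Definition Atri : Sigma2 -> 'M[R]_2 := Amat (fun=> 1) (fun y => 1 - e y ^+ 2) e.

Fixpoint diag_prod (n : nat) (x : Sigma2) : R :=
  if n is m.+1 then (1 - e (iter m Defs.shift x) ^+ 2) * diag_prod m x else 1.

Fixpoint corner (n : nat) (x : Sigma2) : R :=
  if n is m.+1 then corner m x + e (iter m Defs.shift x) * diag_prod m x else 0.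

Lemma Aprod_Atri n x : Aprod Atri n x =
  \matrix_(i < 2, j < 2)
    (if i == 0 :> nat then (if j == 0 :> nat then 1 else corner n x)
     else (if j == 0 :> nat then 0 else diag_prod n x)).
Proof.
elim: n => [|n IH]; apply/matrixP => i j.
  by rewrite !mxE; case: (ord2P i) => ->; case: (ord2P j) => ->.
rewrite /= IH !mxE sum_ord2 !mxE.
by case: (ord2P i) => ->; case: (ord2P j) => -> /=;
  rewrite ?mulr0 ?mul0r ?mulr1 ?mul1r ?addr0 ?add0r // addrC.
Qed.

Hypothesis e_ge0 : forall y, 0 <= e y.
Hypothesis e_le_half : forall y, e y <= 2^-1.

Lemma one_minus_sq_bounds y : 0 < 1 - e y ^+ 2 <= 1.
Proof.
have := e_ge0 y; have := e_le_half y => h1 h2.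
have : e y ^+ 2 <= e y * 2^-1 by rewrite expr2 ler_wpM2l.
by have := sqr_ge0 (e y); lra.
Qed.

Lemma diag_prod_bounds n x : 0 <= diag_prod n x <= 1.
Proof.
elim: n => [|n IH] /=; first by rewrite ler01 lexx.
case/andP: IH => p0 p1.
case/andP: (one_minus_sq_bounds (iter n Defs.shift x)) => /ltW g0 g1.
by rewrite mulr_ge0 //= mulr_ile1.
Qed.

Lemma corner_ge0 n x : 0 <= corner n x.
Proof.
elim: n => [|n IH] //=; case/andP: (diag_prod_bounds n x) => p0 _.
by rewrite addr_ge0 // mulr_ge0.
Qed.

(* Key estimate: e P D <= e^2 P + D^2, where e^2 P is the drop of the
   diagonal product, so the sum telescopes and the corner grows sublinearly. *)
Lemma corner_mul_le n x D : corner n x * D <= (1 - diag_prod n x) + n%:R * D ^+ 2.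
Proof.
elim: n => [|n IH] /=; first by rewrite mul0r subrr mul0r addr0.
case/andP: (diag_prod_bounds n x) => p0 p1.
have := weighted_amgm (e (iter n Defs.shift x)) D p0 p1.
rewrite -natr1; nra.
Qed.

Lemma corner_le n x D : 0 < D -> corner n x <= D^-1 + n%:R * D.
Proof.
move=> D0; have := corner_mul_le n x D; case/andP: (diag_prod_bounds n x) => p0 _ h.
rewrite -(ler_pM2r D0) mulrDl mulVf ?gt_eqF // -mulrA -expr2; lra.
Qed.

Lemma opnorm_Aprod_ge1 n x : 1 <= opnorm (Aprod Atri n x).
Proof.
by have := row0_le_opnorm (Aprod Atri n x) 0; rewrite Aprod_Atri !mxE /= normr1.
Qed.

Lemma corner_le_opnorm n x : corner n x <= opnorm (Aprod Atri n x).
Proof.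
have := row0_le_opnorm (Aprod Atri n x) 1.
by rewrite Aprod_Atri !mxE /= ger0_norm // corner_ge0.
Qed.

Lemma opnorm_le_corner n x : opnorm (Aprod Atri n x) <= 2 + corner n x.
Proof.
apply: le_trans (opnorm_le_entry_sum _) _.
rewrite /entry_sum Aprod_Atri !mxE /= normr1 normr0 addr0.
case/andP: (diag_prod_bounds n x) => p0 p1.
by rewrite !ger0_norm ?corner_ge0 //; lra.
Qed.

Lemma opnorm_Aprod_ge0 n x : 0 <= opnorm (Aprod Atri n x).
Proof. exact: le_trans ler01 (opnorm_Aprod_ge1 _ _). Qed.

(* Since 1 <= ||A^(n)|| <= n + 3, the n-th roots tend to 1. *)
Theorem Atri_root_cvg :
  (fun n : nat => ereal_sup
     [set ((opnorm (Aprod Atri n x)) `^ (n%:R^-1))%:E | x in [set: Sigma2]])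
    @ \oo --> (1%:E : \bar R).
Proof.
apply: cvge_eventually_close => E E0.
have [N HN] := linear_le_expr E0.
exists N.+1 => n hn.
have n0 : (n%:R : R) != 0 by rewrite pnatr_eq0; case: n hn.
have [] := @ereal_sup_within _ (fun x => opnorm (Aprod Atri n x) `^ n%:R^-1) 1 (1 + E).
- move=> x; have A0 := opnorm_Aprod_ge0 n x; apply/andP; split.
    apply: (@le_trans _ _ (1 `^ n%:R^-1)); first by rewrite powR1.
    by apply: ge0_ler_powR; rewrite ?invr_ge0 ?nnegrE ?ler01 ?opnorm_Aprod_ge1.
  have linear : opnorm (Aprod Atri n x) <= (1 + E) `^ n%:R.
    rewrite powR_mulrn; last by lra.
    apply: le_trans (HN n (ltnW hn)); apply: le_trans (opnorm_le_corner n x) _.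
    by have := corner_le n x ltr01; rewrite invr1 mulr1; lra.
  apply: le_trans (ge0_ler_powR _ _ _ linear) _;
    rewrite ?invr_ge0 ?nnegrE ?powR_ge0 //.
  by rewrite -powRrM mulfV // powRr1 //; lra.
- by move=> h1 h2; split=> //; apply: le_trans h1; rewrite lee_fin; lra.
Qed.

(* Since ||A^(n)|| <= 2 + D^-1 + n D for every D > 0, it is o(n). *)
Theorem Atri_sublinear :
  (fun n : nat => ereal_sup
     [set (opnorm (Aprod Atri n x) / n%:R)%:E | x in [set: Sigma2]])
    @ \oo --> (0%:E : \bar R).
Proof.
apply: cvge_eventually_close => E E0.
set D := E / 2.
have D0 : 0 < D by rewrite divr_gt0.
set K := Num.truncn ((2 + D^-1) / D).
have hK : (2 + D^-1) / D < K.+1%:R.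
  have c0 : 0 <= (2 + D^-1) / D by rewrite divr_ge0 ?addr_ge0 ?invr_ge0 ?ltW.
  by case/andP: (truncn_itv c0).
exists K.+1 => n hn.
have n0 : (0 < n%:R :> R) by rewrite ltr0n; case: n hn.
have [] := @ereal_sup_within _ (fun x => opnorm (Aprod Atri n x) / n%:R) 0 E.
- move=> x; apply/andP; split; first by rewrite divr_ge0 ?opnorm_Aprod_ge0 ?ltW.
  rewrite ler_pdivrMr //.
  have Kn : (2 + D^-1) / D < n%:R by apply: lt_le_trans hK _; rewrite ler_nat.
  rewrite ltr_pdivrMr // in Kn.
  apply: le_trans (opnorm_le_corner n x) _.
  have := corner_le n x D0.
  have -> : E = 2 * D by rewrite /D; field.
  lra.
- by move=> /= h1 h2; split; [apply: le_trans _ h1 | apply: le_trans h2 _];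
    rewrite lee_fin; lra.
Qed.

Lemma constant_orbit_bounds x (D : R) :
  (forall k, e (iter k Defs.shift x) = D) ->
  forall n, 1 - n%:R * D ^+ 2 <= diag_prod n x /\
            n%:R * D - n%:R ^+ 2 * D ^+ 3 <= corner n x.
Proof.
move=> eD; have D0 : 0 <= D by rewrite -(eD 0%N) e_ge0.
have gD : 0 <= 1 - D ^+ 2.
  by case/andP: (one_minus_sq_bounds x); rewrite -(eD 0%N) => /ltW.
elim=> [|n [IH1 IH2]] /=.
  by rewrite !mul0r subr0 expr0n /= mul0r subr0 lexx.
rewrite eD.
have D3 : 0 <= D ^+ 3 by rewrite exprn_ge0.
have D4 : 0 <= n%:R * D ^+ 4 :> R by rewrite mulr_ge0 ?exprn_ge0.
split.
  apply: le_trans (ler_wpM2l gD IH1).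
  have -> : (1 - D ^+ 2) * (1 - n%:R * D ^+ 2) = 1 - n.+1%:R * D ^+ 2 + n%:R * D ^+ 4.
    by rewrite -natr1; ring.
  by rewrite lerDl.
have h := ler_wpM2l D0 IH1.
have step : n.+1%:R * D - n.+1%:R ^+ 2 * D ^+ 3 + n.+1%:R * D ^+ 3 =
  (n%:R * D - n%:R ^+ 2 * D ^+ 3) + D * (1 - n%:R * D ^+ 2).
  by rewrite -natr1; ring.
have h3 : 0 <= n.+1%:R * D ^+ 3 :> R by rewrite mulr_ge0.
lra.
Qed.

(* Stopping at n ~ 1/(2 D^2) on such an orbit gives a corner of size ~ 1/(4D). *)
Lemma constant_orbit_corner x (D : R) : 0 < D ->
  (forall k, e (iter k Defs.shift x) = D) ->
  exists2 n, (0 < n)%N & (4 * D)^-1 - 4^-1 <= corner n x.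
Proof.
move=> D0 eD; have D1 : D <= 2^-1 by rewrite -(eD 0%N).
set t := (2 * D ^+ 2)^-1; set n := Num.truncn t.
have t0 : 0 <= t by rewrite invr_ge0 mulr_ge0 ?sqr_ge0.
have [nt tn] : n%:R <= t /\ t < n.+1%:R by case/andP: (truncn_itv t0).
have c2 : 0 < 2 * D ^+ 2 by rewrite mulr_gt0 // exprn_gt0.
have tD : t * (2 * D ^+ 2) = 1 by rewrite mulVf // gt_eqF.
rewrite -natr1 in tn; set a : R := n%:R in nt tn *.
have a0 : 0 <= a by rewrite ler0n.
have k1 : a * (2 * D ^+ 2) <= 1.
  by rewrite -[leRHS]tD; apply: ler_wpM2r; [exact: ltW c2 | exact: nt].
have k2 : 1 <= (a + 1) * (2 * D ^+ 2).
  by rewrite -[leLHS]tD; apply: ler_wpM2r; [exact: ltW c2 | exact: ltW tn].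
have DD : D ^+ 2 <= 4^-1 by rewrite expr2; nra.
exists n.
  by rewrite lt0n; apply/negP => /eqP n0; move: k2; rewrite /a n0 add0r mul1r; lra.
have [_ hs] := constant_orbit_bounds eD n; apply: le_trans hs; rewrite -/a.
have half : a * D * 2^-1 <= a * D * (1 - a * D ^+ 2).
  by apply: ler_wpM2l; [rewrite mulr_ge0 // ltW | lra].
have w0 : 0 < D^-1 by rewrite invr_gt0.
have lower : D^-1 / 2 - D <= a * D.
  have := ler_wpM2r (ltW w0) k2.
  have -> : (a + 1) * (2 * D ^+ 2) * D^-1 = 2 * (a + 1) * D * (D / D) by ring.
  rewrite divff ?gt_eqF // mul1r mulr1; lra.
have -> : a * D - a ^+ 2 * D ^+ 3 = a * D * (1 - a * D ^+ 2) by ring.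
rewrite invfM; lra.
Qed.

Theorem Atri_unbounded :
  (forall r : R, 0 < r -> exists x (D : R), [/\ 0 < D, D <= r &
     forall k, e (iter k Defs.shift x) = D]) ->
  ereal_sup [set y : \bar R | exists (n : nat) (x : Sigma2),
               (0 < n)%N /\ y = (opnorm (Aprod Atri n x))%:E] = +oo%E.
Proof.
move=> small; apply/eqyP => B B0.
have r0 : 0 < (4 * B + 1)^-1 by rewrite invr_gt0; lra.
have [x [D [D0 Dr eD]]] := small _ r0.
have [n n0 big] := constant_orbit_corner D0 eD.
apply: le_trans (ereal_sup_ubound _); last by exists n, x.
rewrite lee_fin; apply: le_trans (corner_le_opnorm n x); apply: le_trans big.
have : 4 * B + 1 <= D^-1 by rewrite -[X in X <= _]invrK lef_pV2 ?posrE ?invr_gt0 //; lra.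
by rewrite invfM; lra.
Qed.

End TriangularCocycle.

Definition differ_upto (W : nat) (y z : Sigma2) : Prop :=
  exists k : nat, (k <= W)%N /\ z k%:Z <> y k%:Z.

Definition periodic_pt (N j : nat) : Sigma2 :=
  fun k => ~~ ((N.+1)%:Z %| k + j%:Z)%Z.

Lemma iter_shift_periodic_pt N j n :
  iter n Defs.shift (periodic_pt N j) = periodic_pt N (j + n).
Proof.
elim: n => [|n IH] /=; first by rewrite addn0.
rewrite IH addnS; apply/funext => k; rewrite /Defs.shift /periodic_pt.
by congr (~~ (_ %| _)%Z); lia.
Qed.

Lemma periodic_pt_mod N j : periodic_pt N j = periodic_pt N (j %% N.+1).
Proof.
apply/funext => k; rewrite /periodic_pt; congr (~~ _).
rewrite {1}(divn_eq j N.+1) PoszD addrA addrAC PoszM.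
by rewrite rpredDr // dvdz_mull // dvdzz.
Qed.

Lemma periodic_pt_false N i (k : nat) :
  (N.+1 %| k + i)%N -> periodic_pt N i k%:Z = false.
Proof. by move=> h; rewrite /periodic_pt -PoszD dvdzE /= h. Qed.

(* Points of a shorter period are told apart within a window of size
   2M+2: a point of period M+1 has a false symbol at two coordinates
   k0 < k0 + M + 1 <= 2M+2, which a point of period N+1 > M+1 cannot both share. *)
Lemma periodic_pts_differ M N i j : (M < N)%N ->
  differ_upto (2 * M + 2) (periodic_pt M i) (periodic_pt N j).
Proof.
move=> MN; set r := (i %% M.+1)%N; set k0 := (M.+1 - r)%N.
have rlt : (r < M.+1)%N by rewrite ltn_mod.
have h0 : (M.+1 %| k0 + i)%N.
  rewrite /k0 {1}(divn_eq i M.+1) -/r.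
  have -> : (M.+1 - r + (i %/ M.+1 * M.+1 + r) = M.+1 + i %/ M.+1 * M.+1)%N by lia.
  by rewrite dvdn_add // dvdn_mull.
have h1 : (M.+1 %| (k0 + M.+1) + i)%N by rewrite addnAC dvdn_add.
case E0: (periodic_pt N j k0%:Z).
  by exists k0; split; [lia | rewrite E0 periodic_pt_false].
case E1: (periodic_pt N j (k0 + M.+1)%:Z).
  by exists (k0 + M.+1)%N; split; [lia | rewrite E1 periodic_pt_false].
move: E0 E1; rewrite /periodic_pt -!PoszD !dvdzE /= => /negbFE a0 /negbFE a1.
have : (N.+1 %| M.+1)%N by move: a1; rewrite addnAC (dvdn_addr _ a0).
by move/dvdn_leq => /(_ isT); lia.
Qed.

Section Separation.
Variables (R : realType) (d : Sigma2 -> Sigma2 -> R).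
Hypothesis d_gen : generates_product_topology d.

(* A cylinder around y is open for the product topology, hence contains a
   d-ball: points differing from y early on are uniformly d-far from y. *)
Lemma cylinder_separation y W : exists2 c : R, 0 < c &
  forall z, differ_upto W y z -> c <= d y z.
Proof.
pose U := fun z : Sigma2 => forall k : int, `|k| <= W%:Z -> z k = y k.
have U_open : prod_open U by move=> x Ux; exists W => z hz k hk; rewrite hz // Ux.
have [c c0 ball_c] := (proj2 (d_gen.2 U)) U_open y (fun _ _ => erefl).
exists c => // z [k [kW zk]].
rewrite leNgt; apply/negP => /ball_c Uz; apply: zk; apply: Uz.
by rewrite ger0_norm // lez_nat.
Qed.

(* Taking the minimum of finitely many such constants. *)
Lemma finite_cylinder_separation (P : nat -> Sigma2) W I : exists2 c : R, 0 < c &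
  forall i, (i <= I)%N -> forall z, differ_upto W (P i) z -> c <= d (P i) z.
Proof.
elim: I => [|I [c c0 sep_c]].
  have [c c0 sep_c] := cylinder_separation (P 0%N) W.
  by exists c => // i; rewrite leqn0 => /eqP ->.
have [c' c0' sep_c'] := cylinder_separation (P I.+1) W.
exists (Num.min c c'); first by rewrite lt_min c0 c0'.
move=> i; rewrite leq_eqVlt => /orP [/eqP ->|iI] z hz.
  by rewrite ge_min sep_c' ?orbT.
by rewrite ge_min sep_c.
Qed.

(* The orbit of period M+1 is finite, so it is separated uniformly. *)
Lemma periodic_separation M : exists2 c : R, 0 < c &
  forall i z, differ_upto (2 * M + 2) (periodic_pt M i) z -> c <= d (periodic_pt M i) z.
Proof.
have [c c0 sep_c] := finite_cylinder_separation (periodic_pt M) (2 * M + 2) M.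
by exists c => // i z; rewrite (periodic_pt_mod M i); apply: sep_c; rewrite -ltnS ltn_mod.
Qed.

End Separation.

Section Bump.
Variables (R : realType) (d : Sigma2 -> Sigma2 -> R).
Hypothesis d_metric : is_metric d.
Variable c : nat -> R.
Hypothesis c_gt0 : forall M, 0 < c M.
Hypothesis c_sep : forall M i z,
  differ_upto (2 * M + 2) (periodic_pt M i) z -> c M <= d (periodic_pt M i) z.

Let d_ge0 x y : 0 <= d x y. Proof. by case: d_metric. Qed.
Let d_xx x : d x x = 0. Proof. by case: d_metric => _ [H _]; apply/H. Qed.
Let d_sym x y : d x y = d y x. Proof. by case: d_metric => _ [_ []]. Qed.
Let d_tri x y z : d x z <= d x y + d y z. Proof. by case: d_metric => _ [_ [_]]. Qed.

Fixpoint height (M : nat) : R :=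
  if M is M'.+1 then Num.min (height M') (Num.min (c M) (M.+2%:R^-1))
  else Num.min (c 0%N) (2^-1).

Lemma height_gt0 M : 0 < height M.
Proof. by elim: M => [|M IH] /=; rewrite !lt_min ?IH c_gt0 invr_gt0 ltr0n. Qed.

Lemma height_le_sep M : height M <= c M.
Proof. by case: M => [|M] /=; rewrite !ge_min ?lexx // orbT. Qed.

Lemma height_le_inv M : height M <= M.+2%:R^-1.
Proof. by case: M => [|M] /=; rewrite !ge_min ?lexx ?orbT. Qed.

Lemma height_nonincreasing M N : (M <= N)%N -> height N <= height M.
Proof.
elim: N => [|N IH]; first by rewrite leqn0 => /eqP ->.
rewrite leq_eqVlt => /orP [/eqP ->|MN] //.
by apply: le_trans (IH MN); rewrite /= ge_min lexx.
Qed.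

Lemma height_le_half M : height M <= 2^-1.
Proof.
apply: le_trans (height_le_inv M) _.
by rewrite lef_pV2 ?posrE // ler_nat.
Qed.

Definition tents (y : Sigma2) : set R :=
  [set r | exists N j, r = Num.max 0 (height N - d y (periodic_pt N j))].

Definition bump (y : Sigma2) : R := sup (tents y).

Lemma tents_ub y : ubound (tents y) (2^-1).
Proof.
move=> _ [N [j ->]]; rewrite ge_max invr_ge0 ler0n /=.
by apply: le_trans (height_le_half N); rewrite lerBlDr lerDl.
Qed.

Lemma tents_has_sup y : has_sup (tents y).
Proof.
split; last by exists 2^-1; exact: tents_ub.
by exists (Num.max 0 (height 0 - d y (periodic_pt 0 0))), 0%N, 0%N.
Qed.

Lemma tent_le_bump y N j : Num.max 0 (height N - d y (periodic_pt N j)) <= bump y.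
Proof. by apply: (sup_upper_bound (tents_has_sup y)); exists N, j. Qed.

Lemma bump_ge0 y : 0 <= bump y.
Proof. by apply: le_trans (tent_le_bump y 0 0); rewrite le_max lexx. Qed.

Lemma bump_le_half y : bump y <= 2^-1.
Proof. by apply: ge_sup; [case: (tents_has_sup y) | exact: tents_ub]. Qed.

(* Each tent is 1-Lipschitz, hence so is their supremum. *)
Lemma bump_le_shift y y' : bump y <= bump y' + d y y'.
Proof.
apply: ge_sup; first by case: (tents_has_sup y).
move=> _ [N [j ->]]; set p := periodic_pt N j.
have tent' := tent_le_bump y' N j; rewrite -/p in tent'.
have tri := d_tri y' y p; rewrite (d_sym y' y) in tri.
apply: le_trans (lerD tent' (lexx (d y y'))).
rewrite ge_max addr_ge0 ?le_max ?lexx //=.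
apply: le_trans (_ : _ <= (height N - d y' p) + d y y') _; first lra.
by rewrite lerD2r le_max lexx orbT.
Qed.

Lemma bump_lipschitz y y' : `|bump y - bump y'| <= d y y'.
Proof.
have h1 := bump_le_shift y y'; have h2 := bump_le_shift y' y.
by rewrite d_sym in h2; rewrite ler_norml; apply/andP; split; lra.
Qed.

(* On the orbit of period N+1 the bump equals height N: tents of shorter
   period are too far away, tents of longer period are lower. *)
Lemma bump_periodic N j : bump (periodic_pt N j) = height N.
Proof.
apply/le_anti/andP; split; last first.
  by apply: le_trans (tent_le_bump _ N j); rewrite d_xx subr0 le_max lexx orbT.
apply: ge_sup; first by case: (tents_has_sup (periodic_pt N j)).
move=> _ [M [i ->]]; rewrite ge_max (ltW (height_gt0 N)) /=.
have := d_ge0 (periodic_pt N j) (periodic_pt M i).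
case: (ltnP M N) => [MN | NM] dge0.
  have := c_sep (periodic_pts_differ i j MN); rewrite d_sym.
  by have := height_le_sep M; have := height_gt0 N; lra.
by have := height_nonincreasing NM; lra.
Qed.

End Bump.

Theorem exists_bump (R : realType) (d : Sigma2 -> Sigma2 -> R) :
  generates_product_topology d ->
  exists e : Sigma2 -> R,
    [/\ forall y, 0 <= e y, forall y, e y <= 2^-1,
        forall y y', `|e y - e y'| <= d y y' &
        forall r : R, 0 < r -> exists x (D : R), [/\ 0 < D, D <= r &
          forall k, e (iter k Defs.shift x) = D]].
Proof.
move=> d_gen; have d_metric := d_gen.1.
have : forall M, exists c : R, 0 < c /\ forall i z,
    differ_upto (2 * M + 2) (periodic_pt M i) z -> c <= d (periodic_pt M i) z.
  by move=> M; have [c c0 sep_c] := periodic_separation d_gen M; exists c.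
case/choice => c sep; have c_gt0 M := (sep M).1; have c_sep M := (sep M).2.
exists (bump d c); split.
- exact: bump_ge0 d_metric c.
- exact: bump_le_half d_metric c.
- exact: bump_lipschitz d_metric c.
move=> r r0; set N := Num.truncn r^-1.
have rN : r^-1 < N.+1%:R.
  have r0' : 0 <= r^-1 by rewrite invr_ge0 ltW.
  by case/andP: (truncn_itv r0').
exists (periodic_pt N 0), (height c N); split.
- exact: height_gt0 c_gt0 N.
- apply: le_trans (height_le_inv c N) _.
  rewrite -[leRHS]invrK lef_pV2 ?posrE ?invr_gt0 //; apply: le_trans (ltW rN) _.
  by rewrite ler_nat.
- by move=> k; rewrite iter_shift_periodic_pt (bump_periodic d_metric c_gt0 c_sep).
Qed.

Lemma lipschitz_one_minus_sq (R : realType) (d : Sigma2 -> Sigma2 -> R)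
    (e : Sigma2 -> R) :
  (forall y, 0 <= e y) -> (forall y, e y <= 2^-1) ->
  (forall y y', `|e y - e y'| <= d y y') ->
  lipschitz_wrt d (fun y => 1 - e y ^+ 2).
Proof.
move=> e_ge0 e_le e_lip; exists 1 => y y'; rewrite mul1r.
have -> : 1 - e y ^+ 2 - (1 - e y' ^+ 2) = (e y' - e y) * (e y' + e y) by ring.
rewrite normrM distrC; apply: le_trans (e_lip y y').
rewrite ler_piMr ?normr_ge0 // ger0_norm ?addr_ge0 //.
by have := e_le y; have := e_le y'; lra.
Qed.

Unset Implicit Arguments. Set Strict Implicit.

Theorem theorem2 (R : realType) (d : Sigma2 -> Sigma2 -> R) :
  generates_product_topology d ->
  exists (f g phi : Sigma2 -> R),
    (forall x : Sigma2, 0 < f x /\ f x <= 1) /\ (forall x : Sigma2, 0 < g x /\ g x <= 1) /\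
    lipschitz_wrt d f /\ lipschitz_wrt d g /\ lipschitz_wrt d phi /\
    let A := Amat f g phi in
    (fun n : nat => ereal_sup
       [set ((opnorm (Aprod A n x)) `^ (n%:R^-1))%:E | x in [set: Sigma2]])
      @ \oo --> (1%:E : \bar R) /\
    (fun n : nat => ereal_sup
       [set (opnorm (Aprod A n x) / n%:R)%:E | x in [set: Sigma2]])
      @ \oo --> (0%:E : \bar R) /\
    ereal_sup [set y : \bar R | exists (n : nat) (x : Sigma2),
                 (0 < n)%N /\ y = (opnorm (Aprod A n x))%:E] = +oo%E.
Proof.
move=> d_gen; have [e [e_ge0 e_le_half e_lip e_small]] := exists_bump d_gen.
exists (fun=> 1), (fun y => 1 - e y ^+ 2), e; split.
  by move=> _; rewrite ltr01 lexx.
split; first by move=> y; apply/andP; exact: one_minus_sq_bounds.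
split; first by exists 0 => x y; rewrite subrr normr0 mul0r.
split; first exact: lipschitz_one_minus_sq.
split; first by exists 1 => x y; rewrite mul1r; exact: e_lip.
split; first exact: Atri_root_cvg.
split; first exact: Atri_sublinear.
exact: Atri_unbounded.
Qed.
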